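(* Let $q=2^h$, $m\ge1$, and on $\mathbb{F}_q^{2m}$ let $\langle u,v\rangle=uFv^T$ with $F=\begin{pmatrix}0&I_m\\ I_m&0\end{pmatrix}$, $\vartheta_0(u)=uEu^T$ with $E=\begin{pmatrix}0&I_m\\0&0\end{pmatrix}$, and $\vartheta_a(u)=\vartheta_0(u)+\langle a,u\rangle^2$. Let $W^+=\{a\in\mathbb{F}_q^{2m}:\mathrm{Tr}_{\mathbb{F}_q/\mathbb{F}_2}(\vartheta_0(a))=0\}$, $W^-=\{a\in\mathbb{F}_q^{2m}:\mathrm{Tr}_{\mathbb{F}_q/\mathbb{F}_2}(\vartheta_0(a))=1\}$, and $F=\{(a,b)\in W^\pm\times W^\pm:\vartheta_a(a+b)=0,\ a\ne b\}$. Then the graph $(W^\pm,F)$ is isomorphic to $NO^{\pm}(2m+1,q)$.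
   Context: $NO^{\pm}(2m+1,q)$ ($q$ even): take a non-singular parabolic quadric $Q(2m,q)$ in $PG(2m,q)$ (zero set of a quadratic form on $\mathbb{F}_q^{2m+1}$ of maximal Witt index $m$), whose polar form has a 1-dimensional radical spanning the nucleus $N$. The vertices are the hyperplanes $H$ with $N\notin H$ such that $H\cap Q(2m,q)$ is a non-singular quadric in $H$ of type $\pm1$ (hyperbolic/elliptic); two vertices $H_1,H_2$ are adjacent iff $H_1\cap H_2\cap Q(2m,q)$ is degenerate (singular in $H_1\cap H_2$). *)

From HB Require Import structures.
From mathcomp Require Import all_boot all_order all_algebra.
Set Implicit Arguments.
Unset Strict Implicit.
Unset Printing Implicit Defensive.
Import GRing.Theory.
Local Open Scope ring_scope.

Section NOGraph.
Variables (F : finFieldType) (m : nat).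

Definition Emx : 'M[F]_(m + m) := block_mx 0 1%:M 0 0.
Definition Fmx : 'M[F]_(m + m) := block_mx 0 1%:M 1%:M 0.
Definition bil (u v : 'rV[F]_(m + m)) : F := (u *m Fmx *m v^T) 0 0.
Definition theta0 (u : 'rV[F]_(m + m)) : F := (u *m Emx *m u^T) 0 0.
Definition theta (a u : 'rV[F]_(m + m)) : F := theta0 u + (bil a u) ^+ 2.
(* absolute trace Tr_{F_q/F_2}(x) = sum_{j<h} x^(2^j), for q = 2^h *)
Definition trF2 (h : nat) (x : F) : F := \sum_(j < h) x ^+ (2 ^ j)%N.
(* W^+ (s = true) and W^- (s = false) *)
Definition Wpm (h : nat) (s : bool) (a : 'rV[F]_(m + m)) : bool :=
  trF2 h (theta0 a) == (if s then 0 else 1).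
Definition Wedge (a b : 'rV[F]_(m + m)) : Prop := theta a (a + b) = 0 /\ a != b.

(* standard non-singular parabolic quadric Q(2m,q) on F^{2m+1}:
   Q(x) = x_0^2 + sum_{i<m} x_{1+i} x_{1+m+i}  (Witt index m) *)
Definition Qf (x : 'rV[F]_(1 + (m + m))) : F :=
  (lsubmx x 0 0) ^+ 2 + theta0 (rsubmx x).
Definition pol (x y : 'rV[F]_(1 + (m + m))) : F := Qf (x + y) - Qf x - Qf y.

Definition hyperplane (H : {set 'rV[F]_(1 + (m + m))}) : Prop :=
  exists c : 'rV[F]_(1 + (m + m)), c != 0 /\ H = [set x | x *m c^T == 0].
(* N not in H: the radical of the polar form (spanned by N) is not in H *)
Definition nucleus_notin (H : {set 'rV[F]_(1 + (m + m))}) : Prop :=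
  exists x, (forall y, pol x y = 0) /\ x \notin H.
Definition nonsing_on (S : {set 'rV[F]_(1 + (m + m))}) : Prop :=
  forall x, x \in S -> Qf x = 0 -> (forall y, y \in S -> pol x y = 0) -> x = 0.
Definition ts_sub (S : {set 'rV[F]_(1 + (m + m))}) (k : nat) : Prop :=
  exists U : 'M[F]_(k, 1 + (m + m)), \rank U = k /\
    forall v : 'rV[F]_(1 + (m + m)), (v <= U)%MS -> v \in S /\ Qf v = 0.
(* S ∩ Q is a non-singular quadric of type +1 (hyperbolic, Witt index m)
   when s = true, of type -1 (elliptic, Witt index m-1) when s = false *)
Definition quadric_type (S : {set 'rV[F]_(1 + (m + m))}) (s : bool) : Prop :=
  nonsing_on S /\ (if s then ts_sub S m else ts_sub S m.-1 /\ ~ ts_sub S m).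
Definition NO_vertex (s : bool) (H : {set 'rV[F]_(1 + (m + m))}) : Prop :=
  [/\ hyperplane H, nucleus_notin H & quadric_type H s].
Definition NO_adj (H1 H2 : {set 'rV[F]_(1 + (m + m))}) : Prop :=
  ~ nonsing_on (H1 :&: H2).

End NOGraph.

(* The hyperplanes of PG(2m,q) missing the nucleus N = <e_0> are exactly the
   H_a = {x : x_0 = <a, x'>}, and x' |-> (<a, x'>, x') identifies H_a with
   F^{2m}, Q with theta_a, and the polar form of Q with the nondegenerate
   alternating form <,>.  Thus H_a /\ H_b becomes (a + b)^perp, whose radical is
   the line through a + b, so it is singular iff theta_a(a + b) = 0.
   The type of theta_a is decided by Tr(theta_0(a)).  If the trace is 0, the
   Artin-Schreier equation s^2 + s = theta_0(a) is solvable, which yields t with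
   theta_0(a) t^2 + t = 1; the transvection u |-> u + t<a,u>a then carries
   theta_a to theta_0, which vanishes on the Lagrangian F^m x 0.  In any case the
   kernel of <a,.> in that Lagrangian is totally singular of dimension m - 1.
   If the trace is 1, translating by a gives
   sum_u (-1)^Tr(theta_a u) = - sum_u (-1)^Tr(theta_0 u), whereas averaging over
   translations by W shows that this character sum equals |W| > 0 for any form
   vanishing on an m-dimensional W. *)

From mathcomp Require Import all_boot all_order all_algebra finfield.
From mathcomp Require Import ring zify.
Set Implicit Arguments.
Unset Strict Implicit.
Unset Printing Implicit Defensive.
Import GRing.Theory Num.Theory.
Local Open Scope ring_scope.

Lemma sqrD_pchar2 (R : comNzRingType) (x y : R) :
  2 \in [pchar R] -> (x + y) ^+ 2 = x ^+ 2 + y ^+ 2.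
Proof. by move=> charR2; rewrite sqrrD mulr2n addrr_pchar2 // addr0. Qed.

Lemma mx11_trmx (R : nmodType) (A : 'M[R]_1) : A^T = A.
Proof. by rewrite [A]mx11_scalar tr_scalar_mx. Qed.

Lemma scalar_mx11E (R : nzRingType) (k : R) : (k%:M : 'M_1) 0 0 = k.
Proof. by rewrite mxE eqxx mulr1n. Qed.

Lemma scalar_mx11_inj (R : nzRingType) (k l : R) : (k%:M : 'M_1) = l%:M -> k = l.
Proof. by move=> e; rewrite -(scalar_mx11E k) e scalar_mx11E. Qed.

Lemma form_trmx (R : comNzRingType) n (A : 'M[R]_n) (u v : 'rV_n) :
  (u *m A *m v^T) 0 0 = (v *m A^T *m u^T) 0 0.
Proof. by rewrite -[u *m A *m v^T]mx11_trmx !trmx_mul trmxK mulmxA. Qed.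

Section Forms.
Variables (F : finFieldType) (m : nat).
Hypothesis charF2 : 2 \in [pchar F].
Local Notation V := 'rV[F]_(m + m).

Lemma trmx_Fmx : (Fmx F m)^T = Fmx F m.
Proof. by rewrite /Fmx tr_block_mx !trmx0 trmx1. Qed.

Lemma Fmx_invol : Fmx F m *m Fmx F m = 1%:M.
Proof.
by rewrite /Fmx mulmx_block !mulmx0 !mul0mx !mulmx1 !addr0 !add0r -scalar_mx_block.
Qed.

Lemma Emx_add_tr : Emx F m + (Emx F m)^T = Fmx F m.
Proof. by rewrite /Emx /Fmx tr_block_mx !trmx0 trmx1 add_block_mx !addr0 !add0r. Qed.

Lemma bilC (u v : V) : bil u v = bil v u.
Proof. by rewrite /bil form_trmx trmx_Fmx. Qed.

Lemma bilDl (u v w : V) : bil (u + v) w = bil u w + bil v w.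
Proof. by rewrite /bil !mulmxDl mxE. Qed.

Lemma bilDr (u v w : V) : bil w (u + v) = bil w u + bil w v.
Proof. by rewrite bilC bilDl !(bilC w). Qed.

Lemma bilZr k (u w : V) : bil w (k *: u) = k * bil w u.
Proof. by rewrite /bil linearZ /= -scalemxAr mxE. Qed.

Lemma bil0l (w : V) : bil 0 w = 0.
Proof. by rewrite /bil !mul0mx mxE. Qed.

Lemma bil0r (w : V) : bil w 0 = 0.
Proof. by rewrite bilC bil0l. Qed.

Lemma bil_mx (a u : V) : u *m Fmx F m *m a^T = (bil a u)%:M.
Proof. by rewrite bilC /bil -mx11_scalar. Qed.

Lemma bil_delta (w : V) i : bil w (delta_mx 0 i) = (w *m Fmx F m) 0 i.
Proof. by rewrite /bil trmx_delta -colE mxE. Qed.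

Lemma mulFmx_eq0 (w : V) : (w *m Fmx F m == 0) = (w == 0).
Proof.
apply/eqP/eqP => [wF0 | ->]; last exact: mul0mx.
by rewrite -[w]mulmx1 -Fmx_invol mulmxA wF0 mul0mx.
Qed.

Lemma bil_nondeg (w : V) : (forall v, bil w v = 0) -> w = 0.
Proof.
move=> w_perp; apply/eqP; rewrite -mulFmx_eq0.
by apply/eqP/rowP => j; rewrite -bil_delta w_perp mxE.
Qed.

Lemma theta0D (u v : V) : theta0 (u + v) = theta0 u + theta0 v + bil u v.
Proof.
have e00 (A B : 'M[F]_1) : (A + B) 0 0 = A 0 0 + B 0 0 by rewrite mxE.
rewrite /theta0 /bil -Emx_add_tr linearD /= !(mulmxDl, mulmxDr) !e00.
by rewrite (form_trmx _ v u); ring.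
Qed.

Lemma theta0Z k (u : V) : theta0 (k *: u) = k ^+ 2 * theta0 u.
Proof. by rewrite /theta0 linearZ /= -!scalemxAl -scalemxAr !mxE expr2 mulrA. Qed.

Lemma theta0_row (x y : 'rV[F]_m) : theta0 (row_mx x y) = (x *m y^T) 0 0.
Proof.
rewrite /theta0 /Emx mul_row_block !mulmx0 !addr0 mulmx1 tr_row_mx mul_row_col.
by rewrite mul0mx add0r.
Qed.

Lemma bil_alt (u : V) : bil u u = 0.
Proof.
rewrite /bil -Emx_add_tr mulmxDr mulmxDl mxE -form_trmx.
exact: addrr_pchar2.
Qed.

Lemma thetaD a (u v : V) : theta a (u + v) = theta a u + theta a v + bil u v.
Proof. by rewrite /theta theta0D bilDr sqrD_pchar2 //; ring. Qed.

Lemma thetaZ a k (u : V) : theta a (k *: u) = k ^+ 2 * theta a u.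
Proof. by rewrite /theta theta0Z bilZr exprMn mulrDr. Qed.

Lemma oppv_pchar2 (u : V) : - u = u.
Proof. by rewrite -scaleN1r oppr_pchar2 // scale1r. Qed.

Lemma addv_eq0_pchar2 (u v : V) : (u + v == 0) = (u == v).
Proof. by rewrite addr_eq0 oppv_pchar2. Qed.

Lemma perp_perp_line (d u : V) : d != 0 ->
  (forall v, bil d v = 0 -> bil u v = 0) -> exists t, u = t *: d.
Proof.
move=> dn0 perp_du; set dF := d *m Fmx F m.
have /rV0Pn [j dFj] : dF != 0 by rewrite mulFmx_eq0.
set t := (u *m Fmx F m) 0 j / dF 0 j; exists t.
have uFE : u *m Fmx F m = t *: dF.
  apply/rowP => i; rewrite [RHS]mxE /t.
  have := perp_du (delta_mx 0 i - (dF 0 i / dF 0 j) *: delta_mx 0 j).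
  rewrite !bilDr -!scaleN1r !bilZr !bil_delta -/dF divfK // mulN1r.
  rewrite subrr => /(_ erefl) /eqP; rewrite mulN1r subr_eq0 => /eqP ->.
  by rewrite mulrAC [RHS]mulrC mulrA.
clearbody t.
by rewrite -[u]mulmx1 -Fmx_invol mulmxA uFE -scalemxAl -mulmxA Fmx_invol mulmx1.
Qed.

End Forms.

Section Hyperplanes.
Variables (F : finFieldType) (m : nat).
Hypothesis charF2 : 2 \in [pchar F].
Local Notation V := 'rV[F]_(m + m).
Local Notation P := 'rV[F]_(1 + (m + m)).

Definition hparam (a : V) : 'M[F]_(m + m, 1 + (m + m)) :=
  row_mx (Fmx F m *m a^T) 1%:M.
Definition hnormal (a : V) : P := row_mx 1%:M (- (a *m Fmx F m)).
Definition hplane (a : V) : {set P} := [set x | x *m (hnormal a)^T == 0].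

Lemma mul_hparam a (u : V) : u *m hparam a = row_mx (bil a u)%:M u.
Proof. by rewrite /hparam mul_mx_row mulmxA bil_mx mulmx1. Qed.

Lemma rsubmx_hparam a (u : V) : rsubmx (u *m hparam a) = u.
Proof. by rewrite mul_hparam row_mxKr. Qed.

Lemma Qf_hparam a (u : V) : Qf (u *m hparam a) = theta a u.
Proof. by rewrite /Qf mul_hparam row_mxKl row_mxKr scalar_mx11E /theta addrC. Qed.

Lemma mem_hplane a (x : P) :
  (x \in hplane a) = (lsubmx x == (bil a (rsubmx x))%:M).
Proof.
rewrite inE /hnormal tr_row_mx -{1}[x]hsubmxK mul_row_col trmx1 mulmx1.
by rewrite linearN /= trmx_mul trmx_Fmx mulmxN mulmxA bil_mx subr_eq0.
Qed.

Lemma hparam_mem a (u : V) : u *m hparam a \in hplane a.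
Proof. by rewrite mem_hplane mul_hparam row_mxKl row_mxKr. Qed.

Lemma hplane_hparam a (x : P) : x \in hplane a -> x = rsubmx x *m hparam a.
Proof. by rewrite mem_hplane mul_hparam => /eqP <-; rewrite hsubmxK. Qed.

Lemma pol_rsubmx (x y : P) : pol x y = bil (rsubmx x) (rsubmx y).
Proof. by rewrite /pol /Qf !linearD /= mxE sqrD_pchar2 // theta0D; ring. Qed.

Lemma hyperplane_hplane a : hyperplane (hplane a).
Proof.
exists (hnormal a); split => //; apply/eqP.
move/(congr1 (fun x : P => lsubmx x 0 0)); rewrite row_mxKl scalar_mx11E linear0 mxE.
exact/eqP/oner_neq0.
Qed.

Lemma nucleus_notin_hplane a : nucleus_notin (hplane a).
Proof.
exists (row_mx 1%:M 0); split => [y|]; first by rewrite pol_rsubmx row_mxKr bil0l.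
rewrite mem_hplane row_mxKl row_mxKr bil0r.
by apply/eqP => /scalar_mx11_inj/eqP; rewrite oner_eq0.
Qed.

Lemma nonsing_hplane a : nonsing_on (hplane a).
Proof.
move=> x xH _ x_rad; rewrite (hplane_hparam xH).
suff -> : rsubmx x = 0 by rewrite mul0mx.
apply: bil_nondeg => v; rewrite -(rsubmx_hparam a v) -pol_rsubmx.
exact/x_rad/hparam_mem.
Qed.

Lemma hplane_inj : injective hplane.
Proof.
move=> a b eq_ab; apply/eqP; rewrite -addv_eq0_pchar2 //; apply/eqP/bil_nondeg => v.
have := hparam_mem a v; rewrite eq_ab mem_hplane mul_hparam row_mxKl row_mxKr.
by move=> /eqP/scalar_mx11_inj; rewrite bilDl => ->; rewrite addrr_pchar2.
Qed.

Lemma hplane_surj (H : {set P}) :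
  hyperplane H -> nucleus_notin H -> exists a, hplane a = H.
Proof.
case=> c [cn0 ->] [x [x_rad xH]].
have x_r0 : rsubmx x = 0.
  by apply: bil_nondeg => v; have := x_rad (row_mx 0 v); rewrite pol_rsubmx row_mxKr.
set c0 := lsubmx c 0 0; have c_l : lsubmx c = c0%:M by rewrite -mx11_scalar.
have c0n0 : c0 != 0.
  apply: contra xH => /eqP c00; rewrite inE -[x]hsubmxK -[c]hsubmxK x_r0 tr_row_mx.
  by rewrite mul_row_col c_l c00 raddf0 trmx0 mulmx0 mul0mx addr0.
exists (- c0^-1 *: (rsubmx c *m Fmx F m)).
have c_E : c = c0 *: hnormal (- c0^-1 *: (rsubmx c *m Fmx F m)).
  rewrite /hnormal scale_row_mx -{1}[c]hsubmxK c_l scalemx1; congr row_mx.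
  rewrite -scalemxAl -mulmxA Fmx_invol mulmx1 scaleNr opprK scalerA mulfV //.
  by rewrite scale1r.
apply/setP => y; rewrite !inE [in RHS]c_E linearZ /= -scalemxAr scaler_eq0.
by rewrite (negbTE c0n0).
Qed.

Lemma mem_hplaneI a b (y : P) : (y \in hplane a :&: hplane b) =
  (y \in hplane a) && (bil (a + b) (rsubmx y) == 0).
Proof.
rewrite inE; case ya: (y \in hplane a) => //=; move: ya; rewrite !mem_hplane.
move=> /eqP ->; rewrite bilDl addr_eq0 oppr_pchar2 //.
by apply/eqP/eqP => [/scalar_mx11_inj|->].
Qed.

Lemma hplane_adj a b : Wedge a b <-> ~ nonsing_on (hplane a :&: hplane b).
Proof.
split.
- case=> th_ab ab nsing; set d := a + b.
  have d_in : d *m hparam a \in hplane a :&: hplane b.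
    by rewrite mem_hplaneI hparam_mem rsubmx_hparam bil_alt ?eqxx.
  have d0 : d = 0.
    rewrite -(rsubmx_hparam a d) (nsing _ d_in) ?Qf_hparam ?linear0 // => y.
    by rewrite mem_hplaneI pol_rsubmx rsubmx_hparam => /andP [_ /eqP].
  by move/eqP: d0; rewrite addv_eq0_pchar2 // (negbTE ab).
- move=> sing; have ab : a != b.
    by apply: contra_notN sing => /eqP <-; rewrite setIid; exact: nonsing_hplane.
  split => //; apply/eqP; apply: contra_notT sing => th_ab x.
  rewrite mem_hplaneI => /andP [xa _] Qx x_rad.
  have [t xt] : exists t, rsubmx x = t *: (a + b).
    apply: perp_perp_line; first by rewrite addv_eq0_pchar2.
    move=> v ab_v; have := x_rad (v *m hparam a).
    rewrite pol_rsubmx rsubmx_hparam mem_hplaneI hparam_mem rsubmx_hparam ab_v.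
    by rewrite eqxx => ->.
  move: Qx; rewrite (hplane_hparam xa) Qf_hparam xt thetaZ // => /eqP.
  rewrite mulf_eq0 (negbTE th_ab) orbF expf_eq0 /= => /eqP t0.
  by rewrite t0 scale0r mul0mx.
Qed.

End Hyperplanes.

Section TotallySingular.
Variables (F : finFieldType) (m : nat).
Hypothesis charF2 : 2 \in [pchar F].
Local Notation V := 'rV[F]_(m + m).

Definition totsing (Q : V -> F) (k : nat) : Prop :=
  exists U : 'M[F]_(k, m + m), \rank U = k /\ forall v : V, (v <= U)%MS -> Q v = 0.

Lemma totsing_sub (Q : V -> F) k n (U : 'M[F]_(n, m + m)) :
  (k <= \rank U)%N -> (forall v : V, (v <= U)%MS -> Q v = 0) -> totsing Q k.
Proof.
move=> kU QU; exists ((pid_mx k : 'M_(k, \rank U)) *m row_base U); split.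
  by rewrite mxrankMfree ?row_base_free // rank_pid_mx.
move=> v vU; apply: QU; apply: submx_trans vU _.
by apply: submx_trans (submxMl _ _) _; rewrite eq_row_base.
Qed.

Lemma hparam_free (a : V) : row_free (hparam a).
Proof.
apply/row_freeP; exists (col_mx 0 1%:M).
by rewrite /hparam mul_row_col mulmx0 add0r mulmx1.
Qed.

Lemma ts_sub_hplane (a : V) k : ts_sub (hplane a) k <-> totsing (theta a) k.
Proof.
split=> [[U [rU U_ts]] | [W [rW W_ts]]].
- have U_E : U = rsubmx U *m hparam a.
    apply/row_matrixP => i; rewrite row_mul rowE mulmx_rsub -rowE.
    by apply: hplane_hparam; case: (U_ts _ (row_sub i U)).
  exists (rsubmx U); split; first by rewrite -(mxrankMfree _ (hparam_free a)) -U_E.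
  move=> v vU; rewrite -Qf_hparam.
  by case: (U_ts (v *m hparam a)); rewrite // [X in (_ <= X)%MS]U_E submxMr.
- exists (W *m hparam a); split; first by rewrite mxrankMfree ?hparam_free.
  move=> v /submxP [w ->]; rewrite mulmxA hparam_mem Qf_hparam; split => //.
  exact/W_ts/submxMl.
Qed.

Definition lagr0 : 'M[F]_(m, m + m) := row_mx 1%:M 0.

Lemma lagr0_free : row_free lagr0.
Proof.
by apply/row_freeP; exists (col_mx 1%:M 0); rewrite mul_row_col mulmx1 mulmx0 addr0.
Qed.

Lemma theta0_lagr0 (x : 'rV[F]_m) : theta0 (x *m lagr0) = 0.
Proof. by rewrite /lagr0 mul_mx_row mulmx1 mulmx0 theta0_row trmx0 mulmx0 mxE. Qed.

Lemma totsing_theta0 : totsing (@theta0 F m) m.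
Proof.
apply: (totsing_sub (U := lagr0)); first by rewrite (eqP lagr0_free).
by move=> v /submxP [w ->]; exact: theta0_lagr0.
Qed.

Lemma totsing_theta_pred (a : V) : totsing (theta a) m.-1.
Proof.
set c := lagr0 *m Fmx F m *m a^T.
apply: (totsing_sub (U := kermx c *m lagr0)).
  by rewrite mxrankMfree ?lagr0_free // mxrank_ker; have := rank_leq_col c; lia.
move=> v /submxP [w ->]; rewrite /theta mulmxA theta0_lagr0 add0r bilC /bil.
have -> : w *m kermx c *m lagr0 *m Fmx F m *m a^T = w *m (kermx c *m c).
  by rewrite /c !mulmxA.
by rewrite mulmx_ker mulmx0 mxE expr0n.
Qed.

Definition transv (a : V) (t : F) : 'M[F]_(m + m) :=
  1%:M + t *: (Fmx F m *m a^T *m a).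

Lemma mul_transv a t (u : V) : u *m transv a t = u + (t * bil a u) *: a.
Proof.
rewrite /transv mulmxDr mulmx1 -scalemxAr !mulmxA bil_mx mul_scalar_mx scalerA.
by rewrite mulrC.
Qed.

Lemma transv_invol (a : V) t : transv a t *m transv a t = 1%:M.
Proof.
have transvK (u : V) : u *m transv a t *m transv a t = u.
  rewrite !mul_transv bilDr bilZr bil_alt // mulr0 addr0 -addrA -scalerDl.
  by rewrite addrr_pchar2 // scale0r addr0.
by apply/row_matrixP => i; rewrite row_mul !rowE transvK mulmx1.
Qed.

Lemma theta0_transv (a u : V) t : theta0 a * t ^+ 2 + t = 1 ->
  theta0 (u *m transv a t) = theta a u.
Proof.
move=> t_root; rewrite mul_transv theta0D theta0Z bilZr /theta (bilC u a).
transitivity (theta0 u + bil a u ^+ 2 * (theta0 a * t ^+ 2 + t)); first by ring.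
by rewrite t_root mulr1.
Qed.

Lemma totsing_theta_root (a : V) t : theta0 a * t ^+ 2 + t = 1 -> totsing (theta a) m.
Proof.
move=> t_root; apply: (totsing_sub (U := lagr0 *m transv a t)).
  rewrite mxrankMfree ?(eqP lagr0_free) //.
  by apply/row_freeP; exists (transv a t); rewrite transv_invol.
move=> v /submxP [w ->]; rewrite -(theta0_transv _ t_root) -!mulmxA transv_invol.
by rewrite mulmx1 theta0_lagr0.
Qed.

Lemma lagrangian_perpE (U : 'M[F]_(m, m + m)) (v : V) : \rank U = m ->
  (forall u w : V, (u <= U)%MS -> (w <= U)%MS -> bil u w = 0) ->
  (v *m Fmx F m *m U^T == 0) = (v <= U)%MS.
Proof.
move=> rU U_iso; rewrite -mulmxA -sub_kermx; set K := kermx _.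
have UK : (U <= K)%MS.
  apply/sub_kermxP/matrixP => i j; rewrite mulmxA [RHS]mxE.
  rewrite -(U_iso _ _ (row_sub i U) (row_sub j U)).
  by rewrite /bil !mxE; apply: eq_bigr => k _; rewrite -row_mul !mxE.
have rK : \rank K = m.
  rewrite mxrank_ker -mxrank_tr trmx_mul trmxK trmx_Fmx mxrankMfree ?rU; first lia.
  by apply/row_freeP; exists (Fmx F m); rewrite Fmx_invol.
have KU : (K <= U)%MS by have := (mxrank_leqif_sup UK).2; rewrite rU rK eqxx.
by apply/idP/idP => vs; [apply: submx_trans KU | apply: submx_trans UK].
Qed.

End TotallySingular.

Section AbsoluteTrace.
Variables (F : finFieldType) (h : nat).
Hypothesis cardF : #|F| = (2 ^ h)%N.
Local Notation Tr := (@trF2 F h).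

Lemma pchar2_F : 2 \in [pchar F].
Proof. exact: card_finPcharP cardF _. Qed.

Lemma trF2_deg_gt0 : (0 < h)%N.
Proof. by move: (card_finNzRing_gt1 F); rewrite cardF; case: (h). Qed.

Lemma cardF_half : #|F| = (2 * 2 ^ h.-1)%N.
Proof. by rewrite cardF -expnS prednK // trF2_deg_gt0. Qed.

Lemma trF2D x y : Tr (x + y) = Tr x + Tr y.
Proof.
rewrite /trF2 -big_split /=; apply: eq_bigr => j _.
by rewrite exprDn_pchar // pnatX pnatE // pchar2_F.
Qed.

Lemma trF2_0 : Tr 0 = 0.
Proof. by apply: (addIr (Tr 0)); rewrite -trF2D !add0r. Qed.

Lemma trF2_sqr x : Tr (x ^+ 2) = Tr x.
Proof.
rewrite /trF2; case: h cardF => [|n cardFn]; first by rewrite !big_ord0.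
rewrite big_ord_recr big_ord_recl /= -exprM -expnS -cardFn expf_card expn0 expr1.
by rewrite addrC; congr (_ + _); apply: eq_bigr => j _; rewrite -exprM -expnS.
Qed.

Lemma trF2_01 x : Tr x = 0 \/ Tr x = 1.
Proof.
have idem : Tr x ^+ 2 = Tr x.
  rewrite -[in RHS]trF2_sqr -(pFrobenius_autE pchar2_F) rmorph_sum /=.
  by apply: eq_bigr => j _; rewrite pFrobenius_autE -!exprM mulnC.
have : Tr x * (Tr x - 1) == 0 by rewrite mulrBr mulr1 -expr2 idem subrr.
by rewrite mulf_eq0 subr_eq0 => /orP [] /eqP; [left | right].
Qed.

Lemma card_trF2_ker : (#|[set x : F | Tr x == 0%R]| <= 2 ^ h.-1)%N.
Proof.
pose P : {poly F} := \sum_(j < h) 'X^(2 ^ j).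
have size_P : size P = (2 ^ h.-1).+1.
  move: trF2_deg_gt0; rewrite {}/P; case: (h) => // n _ /=.
  elim: n => [|n IHn]; first by rewrite big_ord1 expn0 size_polyXn.
  rewrite big_ord_recr /= addrC size_polyDl size_polyXn // IHn ltnS expnS.
  by have := expn_gt0 2 n; lia.
have P_neq0 : P != 0 by rewrite -size_poly_eq0 size_P.
rewrite cardE -ltnS -size_P; apply: max_poly_roots P_neq0 _ _; last exact: enum_uniq.
apply/allP => x; rewrite mem_enum inE /root horner_sum.
by under eq_bigr do rewrite hornerXn.
Qed.

Lemma AS_root_eq (s z : F) : s ^+ 2 + s = z ^+ 2 + z -> s = z \/ s = z + 1.
Proof.
move=> eq_sz; have : (s + z) * (s + z + 1) == 0.
  rewrite mulrDr mulr1 -expr2 sqrD_pchar2 ?pchar2_F //.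
  have -> : s ^+ 2 + z ^+ 2 + (s + z) = (s ^+ 2 + s) + (z ^+ 2 + z) by ring.
  by rewrite eq_sz addrr_pchar2 ?pchar2_F.
rewrite mulf_eq0 -addrA !addr_eq0 !oppr_pchar2 ?pchar2_F //.
by case/orP => /eqP; [left | right].
Qed.

Lemma card_AS_image : (#|F| <= 2 * #|[set (s ^+ 2 + s)%R | s : F]|)%N.
Proof.
set img := [set _ | s : F].
pose r (y : F) := odflt 0 [pick s | s ^+ 2 + s == y].
have r_root s : r (s ^+ 2 + s) ^+ 2 + r (s ^+ 2 + s) = s ^+ 2 + s.
  by rewrite /r; case: pickP => [z /eqP // | /(_ s)]; rewrite eqxx.
have cover : [set: F] \subset r @: img :|: (fun y => r y + 1) @: img.
  apply/subsetP => s _; have img_s : s ^+ 2 + s \in img by apply: imset_f.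
  by case: (AS_root_eq (esym (r_root s))) => ->; apply/setUP; [left | right];
    apply: imset_f.
rewrite -cardsT (leq_trans (subset_leq_card cover)) // mul2n -addnn.
by rewrite (leq_trans (leq_card_setU _ _)) // leq_add ?leq_imset_card.
Qed.

Lemma trF2_AS c : Tr c = 0 -> exists s, s ^+ 2 + s = c.
Proof.
move=> trc0; have img_ker : [set s ^+ 2 + s | s : F] = [set x | Tr x == 0].
  apply/eqP; rewrite eqEcard; apply/andP; split.
    apply/subsetP => _ /imsetP [s _ ->].
    by rewrite inE trF2D trF2_sqr addrr_pchar2 ?pchar2_F.
  apply: leq_trans card_trF2_ker _.
  by rewrite -(leq_pmul2l (isT : (0 < 2)%N)) -cardF_half; exact: card_AS_image.
have : c \in [set x | Tr x == 0] by rewrite inE trc0.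
by rewrite -img_ker => /imsetP [s _ ->]; exists s.
Qed.

Lemma trF2_eq1 : exists d, Tr d = 1.
Proof.
have : ~~ ([set: F] \subset [set x | Tr x == 0]).
  apply/negP => /subset_leq_card; rewrite cardsT cardF_half => /leq_trans.
  by move/(_ _ card_trF2_ker); have := expn_gt0 2 h.-1; lia.
case/subsetPn => d _; rewrite inE => trd_n0; exists d.
by case: (trF2_01 d) => trd; rewrite // trd eqxx in trd_n0.
Qed.

Definition chi (x : F) : int := if Tr x == 0 then 1 else -1.

Lemma chi0 : chi 0 = 1.
Proof. by rewrite /chi trF2_0 eqxx. Qed.

Lemma chi_sqr x : chi (x ^+ 2) = chi x.
Proof. by rewrite /chi trF2_sqr. Qed.

Lemma chiD x y : chi (x + y) = chi x * chi y.
Proof.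
rewrite /chi trF2D.
case: (trF2_01 x) => ->; case: (trF2_01 y) => ->;
  by rewrite ?addr0 ?add0r ?addrr_pchar2 ?pchar2_F ?eqxx ?oner_eq0 ?mulr1 ?mulrNN.
Qed.

End AbsoluteTrace.

Section CharacterSum.
Variables (F : finFieldType) (m h : nat).
Hypothesis cardF : #|F| = (2 ^ h)%N.
Local Notation V := 'rV[F]_(m + m).
Let charF2 := pchar2_F cardF.

Lemma sum_chi_linear n (r : 'rV[F]_n) :
  \sum_(x : 'rV[F]_n) chi h ((r *m x^T) 0 0) =
    if r == 0 then #|{: 'rV[F]_n}|%:R else 0.
Proof.
have [-> | r_n0] := eqVneq r 0.
  by rewrite -sumr_const; apply: eq_bigr => x _; rewrite mul0mx mxE chi0.
have /rV0Pn [j rj] := r_n0.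
have [d trd] := trF2_eq1 cardF.
pose x1 : 'rV[F]_n := (d / r 0 j) *: delta_mx 0 j.
have r_x1 : (r *m x1^T) 0 0 = d.
  by rewrite linearZ /= -scalemxAr trmx_delta -colE !mxE divfK.
set s := \sum_x _; have : s = - s.
  rewrite {1}/s (reindex_inj (addIr x1)) /= -sumrN; apply: eq_bigr => x _.
  by rewrite linearD /= mulmxDr mxE chiD // r_x1 /chi trd oner_eq0 mulrN1.
by lia.
Qed.

Definition chi_sum (Q : V -> F) : int := \sum_(v : V) chi h (Q v).

Lemma chi_sum_theta (a : V) :
  chi h (theta0 a) * chi_sum (theta a) = chi_sum (@theta0 F m).
Proof.
rewrite /chi_sum [RHS](reindex_inj (addIr a)) /= mulr_sumr; apply: eq_bigr => v _.
by rewrite /theta theta0D !chiD // chi_sqr // (bilC a v); ring.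
Qed.

Lemma chi_sum_gt0 (Q : V -> F) :
  (forall u v, Q (u + v) = Q u + Q v + bil u v) -> totsing Q m -> 0 < chi_sum Q.
Proof.
move=> QD [U [rU QU]].
have U_iso u w : (u <= U)%MS -> (w <= U)%MS -> bil u w = 0.
  by move=> uU wU; have := QD u w; rewrite !QU ?addmx_sub // !add0r => /esym.
have shift (x : 'rV[F]_m) : chi_sum Q =
    \sum_v chi h (Q v) * chi h ((v *m Fmx F m *m U^T *m x^T) 0 0).
  rewrite /chi_sum (reindex_inj (addIr (x *m U))) /=; apply: eq_bigr => v _.
  by rewrite QD (QU _ (submxMl _ _)) addr0 chiD // /bil trmx_mul !mulmxA.
have count : \sum_(x : 'rV[F]_m) chi_sum Q =
    \sum_(v : V | (v <= U)%MS) #|{: 'rV[F]_m}|%:R.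
  rewrite (eq_bigr _ (fun x _ => shift x)) exchange_big [RHS]big_mkcond /=.
  apply: eq_bigr => v _; rewrite -mulr_sumr sum_chi_linear lagrangian_perpE //.
  by case: ifP => [vU | _]; rewrite ?mulr0 // QU ?chi0 ?mul1r.
have rV_gt0 : (0 < #|{: 'rV[F]_m}|)%N by apply/card_gt0P; exists 0.
move: count; rewrite !sumr_const => count.
rewrite -(pmulrn_lgt0 _ rV_gt0) count pmulrn_lgt0 ?ltr0n //.
by apply/card_gt0P; exists 0; exact: sub0mx.
Qed.

Lemma not_totsing_theta (a : V) : trF2 h (theta0 a) = 1 -> ~ totsing (theta a) m.
Proof.
move=> tr1 ts_a; have := chi_sum_theta a; rewrite /chi tr1 oner_eq0 mulN1r.
have := chi_sum_gt0 (thetaD charF2 a) ts_a.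
have := chi_sum_gt0 (@theta0D F m) (totsing_theta0 F m).
by lia.
Qed.

Lemma totsing_theta_tr0 (a : V) : trF2 h (theta0 a) = 0 -> totsing (theta a) m.
Proof.
move=> tr0; have [c0 | c_n0] := eqVneq (theta0 a) 0.
  by apply: (totsing_theta_root charF2 (t := 1)); rewrite c0 mul0r add0r.
have [s s_root] := trF2_AS cardF tr0.
apply: (totsing_theta_root charF2 (t := s / theta0 a)).
by rewrite -s_root in c_n0 *; field.
Qed.

Lemma quadric_type_hplane (a : V) s : quadric_type (hplane a) s <-> Wpm h s a.
Proof.
have ts_tr0 : totsing (theta a) m <-> trF2 h (theta0 a) = 0.
  split=> [ts_a | /totsing_theta_tr0 //].
  by case: (trF2_01 cardF (theta0 a)) => // /not_totsing_theta.
rewrite /quadric_type /Wpm; have nsing : nonsing_on (hplane a) by exact: nonsing_hplane.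
case: s; rewrite !ts_sub_hplane ts_tr0.
  by split=> [[_ ->] // | /eqP tr0].
split=> [[_ [_ tr_n0]] | /eqP tr1].
  by case: (trF2_01 cardF (theta0 a)) => tr; rewrite tr // in tr_n0 *.
by rewrite tr1; split=> //; split; [exact: totsing_theta_pred | exact/eqP/oner_neq0].
Qed.

End CharacterSum.

Theorem lemma3p4 (F : finFieldType) (h m : nat) (s : bool) :
  #|F| = (2 ^ h)%N -> (0 < m)%N ->
  exists f : 'rV[F]_(m + m) -> {set 'rV[F]_(1 + (m + m))},
    [/\ forall a, Wpm h s a -> NO_vertex s (f a),
        forall a b, Wpm h s a -> Wpm h s b -> f a = f b -> a = b,
        forall H, NO_vertex s H -> exists2 a, Wpm h s a & f a = H
      & forall a b, Wpm h s a -> Wpm h s b ->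
          (Wedge a b <-> NO_adj (f a) (f b))].
Proof.
(* The argument never uses [0 < m]. *)
move=> cardF _; have charF2 := pchar2_F cardF.
exists (fun a => hplane a); split.
- move=> a Wa; split; [exact: hyperplane_hplane | exact: nucleus_notin_hplane |].
  exact/(quadric_type_hplane cardF).
- by move=> a b _ _; exact: hplane_inj.
- move=> H [hypH nucH typH]; have [a aH] := hplane_surj charF2 hypH nucH.
  by exists a => //; apply/(quadric_type_hplane cardF); rewrite aH.
- by move=> a b _ _; exact: hplane_adj.
Qed.
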